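(* Let $G=(V,E)$ be a unit-weight graph and let $\theta\in[0,1]^V$ be an arbitrary stable solution. Then there exists a distribution $\mathcal{D}$ supported on independent sets of $G$ such that $\Pr_{S\sim\mathcal{D}}[v\in S]=\theta_v$ for every $v\in V$.
   Context: A unit-weight graph corresponds to a symmetric matrix $W\in\{0,1\}^{V\times V}$ with $W_{v,v}=1$, where $\{u,v\}\in E$ iff $u\ne v$ and $W_{u,v}=1$. A vector $\theta\in\mathbb{R}_{\ge0}^V$ is feasible if $W\theta\ge\mathbf 1$ coordinatewise, and is a stable solution if it is feasible and for every $v\in V$, $\theta_v=\min\{x\ge0:x+\sum_{u:\{u,v\}\in E}\theta_u\ge1\}$. *)

From mathcomp Require Import all_boot all_order all_algebra.
Set Implicit Arguments. Unset Strict Implicit. Unset Printing Implicit Defensive.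
Import Order.TTheory GRing.Theory Num.Theory.
Local Open Scope ring_scope.

(* A unit-weight graph on the finite vertex set V is a symmetric 0/1 matrix
   W : V -> V -> bool with W v v = true. *)
Definition unit_weight_graph (V : finType) (W : V -> V -> bool) : Prop :=
  (forall u v, W u v = W v u) /\ (forall v, W v v).

Definition edge (V : finType) (W : V -> V -> bool) (u v : V) : bool :=
  (u != v) && W u v.

Definition feasible (R : realFieldType) (V : finType) (W : V -> V -> bool)
    (theta : V -> R) : Prop :=
  (forall v, 0 <= theta v) /\
  (forall v, 1 <= \sum_(u | W v u) theta u).

Definition is_min_nonneg_completion (R : realFieldType) (V : finType)
    (W : V -> V -> bool) (theta : V -> R) (v : V) (x : R) : Prop :=
  [/\ 0 <= x, 1 <= x + \sum_(u | edge W v u) theta u &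
      forall y, 0 <= y -> 1 <= y + \sum_(u | edge W v u) theta u -> x <= y].

Definition stable_solution (R : realFieldType) (V : finType)
    (W : V -> V -> bool) (theta : V -> R) : Prop :=
  feasible W theta /\
  (forall v, is_min_nonneg_completion W theta v (theta v)).

Definition independent_set (V : finType) (W : V -> V -> bool) (S : {set V}) : bool :=
  [forall u in S, forall v in S, ~~ edge W u v].

Definition distribution (R : realFieldType) (V : finType) (D : {set V} -> R) : Prop :=
  (forall S, 0 <= D S) /\ \sum_(S : {set V}) D S = 1.

(* Process the vertices one at a time, maintaining a finite mixture of
   independent sets of the processed vertices whose marginals are [theta].
   Stability gives [theta w + sum_(u ~ w) theta u <= 1] whenever
   [theta w > 0], so by the union bound the sets containing no neighbour of
   the next vertex [w] carry mass at least [theta w]; adding [w] to the same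
   fraction [theta w / mass] of each of them gives [w] marginal [theta w]
   and leaves all other marginals unchanged. *)

From mathcomp Require Import all_boot all_order all_algebra.
From mathcomp Require Import lra.
Import Order.TTheory GRing.Theory Num.Theory.
Local Open Scope ring_scope.
Set Implicit Arguments. Unset Strict Implicit.

Lemma min_nonneg_completion_pos (R : realFieldType) (V : finType)
    (W : V -> V -> bool) (theta : V -> R) v x :
  is_min_nonneg_completion W theta v x -> 0 < x ->
  x + \sum_(u | edge W v u) theta u = 1.
Proof.
case=> _ x_feas x_min x_gt0; set N := \sum_(u | edge W v u) theta u in x_feas x_min *.
have [N_le1 | N_gt1] := lerP N 1.
- have := x_min (1 - N); rewrite subrK subr_ge0 N_le1 lexx => /(_ isT isT); lra.
- have := x_min 0 (lexx 0); rewrite add0r => /(_ (ltW N_gt1)); lra.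
Qed.

Section GreedyMixture.
Variables (R : realFieldType) (V : finType) (W : V -> V -> bool) (theta : V -> R).
Hypothesis W_sym : forall u v, W u v = W v u.
Hypothesis theta_ge0 : forall v, 0 <= theta v.
Hypothesis closed_nbhd_le1 :
  forall v, 0 < theta v -> theta v + \sum_(u | edge W v u) theta u <= 1.

Definition mass (L : seq (R * {set V})) (P : pred {set V}) : R :=
  \sum_(x <- L | P x.2) x.1.

Definition nbhd_disjoint (w : V) (S : {set V}) : bool := [forall u in S, ~~ edge W w u].

Definition realizes (s : seq V) (L : seq (R * {set V})) : Prop :=
  [/\ forall x, x \in L -> [/\ 0 <= x.1, independent_set W x.2 & {subset x.2 <= s}],
      mass L predT = 1 &
      forall v, v \in s -> mass L (fun S => v \in S) = theta v].

Lemma edge_sym u v : edge W u v = edge W v u.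
Proof. by rewrite /edge W_sym eq_sym. Qed.

Lemma independent_setU1 w S :
  independent_set W S -> nbhd_disjoint w S -> independent_set W (w |: S).
Proof.
move=> /forall_inP indS /forall_inP disjS; apply/forall_inP => u.
rewrite in_setU1 => /predU1P[-> | uS]; apply/forall_inP => v;
  rewrite in_setU1 => /predU1P[-> | vS].
- by rewrite /edge eqxx.
- exact: disjS.
- by rewrite edge_sym; apply: disjS.
- exact: (forall_inP (indS u uS)).
Qed.

Lemma mass_nbhd_meeting_le L w : (forall x, x \in L -> 0 <= x.1) ->
  mass L (predC (nbhd_disjoint w)) <= \sum_(u | edge W w u) mass L (fun S => u \in S).
Proof.
move=> L_ge0; rewrite /mass (exchange_big_dep predT) //= big_mkcond /=.
rewrite !big_seq; apply: ler_sum => x xL; have x_ge0 := L_ge0 x xL.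
case: ifP => [/forallPn[u] | _]; last exact: sumr_ge0.
rewrite negb_imply negbK => /andP[ux wu].
by rewrite (bigD1 u) ?wu ?ux //= lerDl sumr_ge0.
Qed.

Lemma realizes_mass_mem_le s L v :
  realizes s L -> mass L (fun S => v \in S) <= theta v.
Proof.
case=> L_ok _ marg; have [vs | vNs] := boolP (v \in s); first by rewrite marg.
rewrite /mass big_seq_cond big1 // => x /andP[xL vx].
by have [_ _ /(_ v vx)] := L_ok x xL; rewrite (negbTE vNs).
Qed.

Lemma realizes_mass_nbhd_disjoint_ge s L w :
  realizes s L -> 0 < theta w -> theta w <= mass L (nbhd_disjoint w).
Proof.
move=> L_real w_gt0; have [L_ok L_mass _] := L_real.
have meeting_le : mass L (predC (nbhd_disjoint w)) <= \sum_(u | edge W w u) theta u.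
  apply: le_trans (mass_nbhd_meeting_le w _) _; first by move=> x /L_ok[].
  by apply: ler_sum => u _; apply: realizes_mass_mem_le L_real.
have mass_split : mass L predT = mass L (nbhd_disjoint w) + mass L (predC (nbhd_disjoint w)).
  exact: bigID.
have := closed_nbhd_le1 w_gt0; lra.
Qed.

Definition split_set (w : V) (c : R) (x : R * {set V}) : seq (R * {set V}) :=
  if nbhd_disjoint w x.2 then [:: (c * x.1, w |: x.2); ((1 - c) * x.1, x.2)] else [:: x].

Definition insert_vertex (w : V) (c : R) (L : seq (R * {set V})) :=
  flatten [seq split_set w c x | x <- L].

Lemma mass_insert_vertex w c L P :
  mass (insert_vertex w c L) P = \sum_(x <- L) mass (split_set w c x) P.
Proof. by rewrite /mass big_flatten big_map. Qed.

Definition insertion_rate (w : V) (L : seq (R * {set V})) : R :=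
  theta w / mass L (nbhd_disjoint w).

Lemma insertion_rate_spec s L w : realizes s L ->
  0 <= insertion_rate w L <= 1 /\
  insertion_rate w L * mass L (nbhd_disjoint w) = theta w.
Proof.
move=> L_real; rewrite /insertion_rate.
have [w_eq0 | w_gt0] := eqVneq (theta w) 0; first by rewrite w_eq0 !mul0r lexx ler01.
have w_pos : 0 < theta w by rewrite lt_def w_gt0 theta_ge0.
have disj_ge := realizes_mass_nbhd_disjoint_ge L_real w_pos.
have disj_gt0 : 0 < mass L (nbhd_disjoint w) by apply: lt_le_trans disj_ge.
rewrite divr_ge0 ?(ltW w_pos) ?(ltW disj_gt0) ?ler_pdivrMr // mul1r divfK ?gt_eqF //.
Qed.

Lemma realizes_insert_vertex s L w : w \notin s -> realizes s L ->
  realizes (w :: s) (insert_vertex w (insertion_rate w L) L).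
Proof.
move=> wNs L_real; have [/andP[c_ge0 c_le1] c_mass] := insertion_rate_spec w L_real.
have [L_ok L_mass L_marg] := L_real; set c := insertion_rate w L in c_ge0 c_le1 c_mass *.
split.
- move=> y /flattenP[_ /mapP[x xL ->]]; have [x_ge0 x_ind x_sub] := L_ok x xL.
  have sub_ws : {subset x.2 <= w :: s} by move=> u /x_sub us; rewrite inE us orbT.
  rewrite /split_set; case: ifP => x_disj; last by rewrite inE => /eqP->.
  rewrite !inE => /orP[] /eqP-> /=.
  + split; [exact: mulr_ge0 | exact: independent_setU1 |].
    by move=> u; rewrite in_setU1 inE => /orP[-> // | /sub_ws].
  + by split; rewrite // mulr_ge0 // subr_ge0.
- rewrite mass_insert_vertex -L_mass; apply: eq_bigr => x _.
  by rewrite /mass /split_set; case: ifP => _; rewrite !big_cons big_nil /=; lra.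
- move=> v; rewrite inE mass_insert_vertex => /predU1P[-> | vs].
  + rewrite -c_mass /mass mulr_sumr [RHS]big_mkcond /= !big_seq; apply: eq_bigr => x xL.
    have [_ _ x_sub] := L_ok x xL.
    have wNx : w \notin x.2 by apply: contra wNs => /x_sub.
    rewrite /split_set; case: ifP => _;
      by rewrite !big_cons big_nil /= ?in_setU1 ?eqxx /= (negbTE wNx) ?addr0.
  + have vw : v != w by apply: contraNneq wNs => <-.
    rewrite -(L_marg v vs) /mass [RHS]big_mkcond /=; apply: eq_bigr => x _.
    rewrite /split_set; case: ifP => _;
      rewrite !big_cons big_nil /= ?in_setU1 ?(negbTE vw) /=; case: (v \in x.2) => //; lra.
Qed.

Lemma realizes_exists (s : seq V) : uniq s -> exists L, realizes s L.
Proof.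
elim: s => [_ | w s IH /andP[wNs s_uniq]].
  exists [:: (1, set0)]; split; last by [].
  - move=> x; rewrite inE => /eqP-> /=; split=> //; last by move=> u; rewrite inE.
    by apply/forall_inP => u; rewrite inE.
  - by rewrite /mass big_seq1.
have [L L_real] := IH s_uniq.
by exists (insert_vertex w (insertion_rate w L) L); apply: realizes_insert_vertex.
Qed.

End GreedyMixture.

Lemma sum_mass_pred1 (R : realFieldType) (V : finType) (L : seq (R * {set V}))
    (P : pred {set V}) :
  \sum_(S | P S) mass L (pred1 S) = mass L P.
Proof.
rewrite /mass (exchange_big_dep (fun x => P x.2)) /=; last by move=> S x PS /eqP ->.
apply: eq_bigr => x Px; rewrite (eq_bigl (pred1 x.2)) ?big_pred1_eq // => S /=.
by rewrite eq_sym andb_idl // => /eqP ->.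
Qed.

Theorem lemma3p6 (R : realFieldType) (V : finType) (W : V -> V -> bool)
    (theta : V -> R) :
  unit_weight_graph W ->
  (forall v, 0 <= theta v <= 1) ->
  stable_solution W theta ->
  exists D : {set V} -> R,
    [/\ distribution D,
        (forall S, D S != 0 -> independent_set W S) &
        (forall v, \sum_(S : {set V} | v \in S) D S = theta v)].
Proof.
move=> [W_sym _] theta01 [_ theta_min].
have theta_ge0 v : 0 <= theta v by case/andP: (theta01 v).
have closed_nbhd_le1 v : 0 < theta v -> theta v + \sum_(u | edge W v u) theta u <= 1.
  by move=> v_gt0; rewrite (min_nonneg_completion_pos (theta_min v) v_gt0).
have [L [L_ok L_mass L_marg]] :=
  realizes_exists W_sym theta_ge0 closed_nbhd_le1 (enum_uniq V).
exists (fun S => mass L (pred1 S)); split; first split.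
- move=> S; rewrite /mass big_seq_cond sumr_ge0 // => x /andP[/L_ok[] //].
- by rewrite -L_mass; apply: (sum_mass_pred1 L predT).
- move=> S; apply: contraR => S_dep; rewrite /mass big_seq_cond big1 // => x /andP[xL /eqP xS].
  by have [_ x_ind _] := L_ok x xL; rewrite -xS x_ind in S_dep.
- by move=> v; rewrite (sum_mass_pred1 L (fun S => v \in S)) L_marg ?mem_enum.
Qed.
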